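(* Suppose $(A,V,B)$ satisfies Schur-Weyl duality and $e\in B$ is an idempotent with $Ve\neq0$. Then the following are equivalent: (1) the triple $(A,Ve,eBe)$ satisfies Schur-Weyl duality; (2) every $eBe$-linear endomorphism of $Ve$ extends to a $B$-linear endomorphism of $V$ (i.e. the restriction map $\Theta_e:\operatorname{End}_B(V)\to\operatorname{End}_{eBe}(Ve)$, $\varphi\mapsto\varphi|_{Ve}$, is surjective).
   Context: $k$ is a field, $A,B$ are $k$-algebras, $V$ an $(A,B)$-bimodule. $(A,V,B)$ satisfies Schur-Weyl duality if the image of $A$ in $\operatorname{End}_k(V)$ (via $a\mapsto(v\mapsto av)$) equals $\operatorname{End}_B(V)$ and the image of $B$ (via $b\mapsto(v\mapsto vb)$) equals $\operatorname{End}_A(V)$. $Ve$ is an $(A,eBe)$-bimodule; any $B$-linear $\varphi$ satisfies $\varphi(Ve)\subseteq Ve$. *)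

From HB Require Import structures.
From mathcomp Require Import all_boot all_order all_algebra.
Set Implicit Arguments. Unset Strict Implicit. Unset Printing Implicit Defensive.
Import GRing.Theory.
Local Open Scope ring_scope.

Section Bimod.
Variables (k : fieldType) (A B : algType k) (V : lmodType k).

Definition is_bimodule (la : A -> V -> V) (ra : V -> B -> V) : Prop :=
  (forall (c : k) a a' v, la (c *: a + a') v = c *: la a v + la a' v) /\
  (forall a (c : k) v w, la a (c *: v + w) = c *: la a v + la a w) /\
  (forall a a' v, la (a * a') v = la a (la a' v)) /\
  (forall v, la 1 v = v) /\
  (forall (c : k) v b b', ra v (c *: b + b') = c *: ra v b + ra v b') /\
  (forall (c : k) v w b, ra (c *: v + w) b = c *: ra v b + ra w b) /\
  (forall v b b', ra v (b * b') = ra (ra v b) b') /\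
  (forall v, ra v 1 = v) /\
  (forall a v b, la a (ra v b) = ra (la a v) b).

(* Restricted setting: U is a k-subspace of V (e.g. Ve), C a subset of B
   (e.g. eBe); maps V -> V are considered as endomorphisms of U, i.e.
   only their values on U matter. *)
Definition klin_on (U : pred V) (f : V -> V) : Prop :=
  (forall u, U u -> U (f u)) /\
  (forall (c : k) u w, U u -> U w -> f (c *: u + w) = c *: f u + f w).

Definition is_EndB (ra : V -> B -> V) (U : pred V) (C : pred B) (f : V -> V)
  : Prop :=
  klin_on U f /\ (forall u b, U u -> C b -> f (ra u b) = ra (f u) b).

Definition is_EndA (la : A -> V -> V) (U : pred V) (f : V -> V) : Prop :=
  klin_on U f /\ (forall a u, U u -> f (la a u) = la a (f u)).

Definition schur_weyl (la : A -> V -> V) (ra : V -> B -> V)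
    (U : pred V) (C : pred B) : Prop :=
  [/\ (forall a, is_EndB ra U C (la a)),
      (forall f, is_EndB ra U C f -> exists a, forall u, U u -> f u = la a u),
      (forall b, C b -> is_EndA la U (fun v => ra v b)) &
      (forall g, is_EndA la U g ->
          exists2 b, C b & forall u, U u -> g u = ra u b)].

End Bimod.

From HB Require Import structures.
From mathcomp Require Import all_boot all_order all_algebra.
Import GRing.Theory.
Set Implicit Arguments. Unset Strict Implicit.
Local Open Scope ring_scope.

(* The maps [v |-> v e] and [b |-> e b e] are idempotent projections onto [Ve]
   and [eBe].  Hence an [A]-endomorphism [g] of [Ve] extends to the
   [A]-endomorphism [v |-> g (v e)] of [V], which by duality on [V] is right
   multiplication by some [b], and then [g] is right multiplication by
   [e b e].  The image of [A] always consists of [eBe]-endomorphisms of [Ve],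
   so the only condition left is that every [eBe]-endomorphism of [Ve] come
   from [A], i.e. from an element of [End_B(V)]: that is the extension
   property. *)

Section Corner.
Variables (k : fieldType) (A B : algType k) (V : lmodType k).
Variables (la : A -> V -> V) (ra : V -> B -> V) (e : B).

Hypothesis la_linear : forall a (c : k) v w, la a (c *: v + w) = c *: la a v + la a w.
Hypothesis ra_linear : forall (c : k) v w b, ra (c *: v + w) b = c *: ra v b + ra w b.
Hypothesis raM : forall v b b', ra v (b * b') = ra (ra v b) b'.
Hypothesis la_ra : forall a v b, la a (ra v b) = ra (la a v) b.
Hypothesis e_idem : e * e = e.

Definition corner_mod : pred V := fun v => ra v e == v.
Definition corner_alg : pred B := fun b => e * b * e == b.

Lemma corner_mod_ra v : corner_mod (ra v e).
Proof. by rewrite /corner_mod -raM e_idem. Qed.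

Lemma corner_alg_proj b : corner_alg (e * b * e).
Proof. by rewrite /corner_alg -!mulrA e_idem !mulrA e_idem. Qed.

Lemma corner_alg_mulr b : corner_alg b -> b * e = b.
Proof. by move=> /eqP <-; rewrite -!mulrA e_idem. Qed.

Lemma la_is_EndB_corner a : is_EndB ra corner_mod corner_alg (la a).
Proof.
split; [split|].
- by move=> u /eqP Hu; rewrite /corner_mod -la_ra Hu.
- by move=> c u w _ _; apply: la_linear.
- by move=> u b _ _; apply: la_ra.
Qed.

Lemma ra_is_EndA_corner b : corner_alg b -> is_EndA la corner_mod (ra^~ b).
Proof.
move=> Cb; split; [split|].
- by move=> u _; rewrite /corner_mod -raM corner_alg_mulr.
- by move=> c u w _ _; apply: ra_linear.
- by move=> a u _; rewrite la_ra.
Qed.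

Lemma EndA_corner_extend g :
  is_EndA la corner_mod g -> is_EndA la predT (fun v => g (ra v e)).
Proof.
move=> [[_ g_lin] g_la]; split; [split|] => //.
- by move=> c u w _ _; rewrite ra_linear g_lin ?corner_mod_ra.
- by move=> a u _; rewrite -la_ra g_la ?corner_mod_ra.
Qed.

Lemma EndA_corner_ra :
  schur_weyl la ra predT predT ->
  forall g, is_EndA la corner_mod g ->
  exists2 b, corner_alg b & forall u, corner_mod u -> g u = ra u b.
Proof.
move=> [_ _ _ sw_ra] g Hg; have [[g_stable _] _] := Hg.
have [b _ Hb] := sw_ra _ (EndA_corner_extend Hg).
exists (e * b * e); first exact: corner_alg_proj.
move=> u /eqP Hu.
by rewrite !raM Hu -Hb //= Hu; apply/esym/eqP/g_stable/eqP.
Qed.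

Lemma EndB_la_iff_extend (U : pred V) (C : pred B) :
  schur_weyl la ra predT predT ->
  (forall g, is_EndB ra U C g -> exists a, forall u, U u -> g u = la a u) <->
  (forall g, is_EndB ra U C g ->
     exists2 f, is_EndB ra predT predT f & forall u, U u -> f u = g u).
Proof.
move=> [la_EndB sw_la _ _]; split=> Hext g Hg.
- have [a Ha] := Hext g Hg.
  by exists (la a) => // u /Ha ->.
- have [f Hf Hfg] := Hext g Hg; have [a Ha] := sw_la f Hf.
  by exists a => u Hu; rewrite -Hfg // Ha.
Qed.

End Corner.

Theorem lemma2 (k : fieldType) (A B : algType k) (V : lmodType k)
    (la : A -> V -> V) (ra : V -> B -> V) (e : B) :
  is_bimodule la ra ->
  schur_weyl la ra predT predT ->
  e * e = e ->
  (exists v : V, ra v e != 0) ->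
  let Ve : pred V := fun v => ra v e == v in
  let eBe : pred B := fun b => e * b * e == b in
  schur_weyl la ra Ve eBe <->
  (forall g, is_EndB ra Ve eBe g ->
     exists2 f, is_EndB ra predT predT f & forall u, Ve u -> f u = g u).
Proof.
move=> [_ [la_lin [_ [_ [_ [ra_lin [raM [_ la_ra]]]]]]]] sw e_idem _ Ve eBe.
have sw_la_iff := EndB_la_iff_extend Ve eBe sw.
split=> [[_ sw_la_corner _ _] | Hext]; first exact/sw_la_iff.
split.
- exact: la_is_EndB_corner.
- exact/sw_la_iff.
- exact: ra_is_EndA_corner.
- exact: EndA_corner_ra.
Qed.
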